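(* Let $G$ be a graph without isolated vertices such that $d_G(u)+d_G(v)\ge 4$ for every edge $uv$ of $G$. Consider any stage of the total domination game on $G$ (starting with all vertices white) at which every legal move has value at most $4$, and let $R$ be the residual graph at this stage. Then every component $C$ of $R$ satisfies one of the following: (a) $C\cong P_4$, with both leaves blue and both internal vertices white; (b) $C\cong P_3$, with both leaves blue and the central vertex green; (c) $C\cong P_2$, with one vertex blue and the other green; (d) $C\cong P_2$, with one vertex blue and the other white.
   Context: The total domination game on a graph $G$ without isolated vertices: Dominator and Staller alternately choose vertices (Dominator first); a chosen vertex must be adjacent to at least one vertex not adjacent to any previously chosen vertex (such a vertex is a legal move); the game ends when every vertex of $G$ has a neighbor among the chosen vertices. At any stage, let $D$ be the set of vertices chosen so far. Each vertex is colored: white if it has no neighbor in $D$ and is not in $D$; green if it has no neighbor in $D$ but is in $D$; blue if it has a neighbor in $D$ but some neighbor of it has no neighbor in $D$; red if it and all its neighbors have a neighbor in $D$. Weights: white $3$, green $2$, blue $1$, red $0$; the value of a legal move is the decrease in the total weight (sum of all vertex weights) caused by playing it. The residual graph $R$ is obtained from $G$ by deleting all red vertices and all edges joining two blue vertices, with vertices keeping their colors. *)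

From mathcomp Require Import all_boot.
Set Implicit Arguments. Unset Strict Implicit. Unset Printing Implicit Defensive.

Section TotalDomGame.
Variables (T : finType) (e : rel T).

Definition simple_graph : Prop := symmetric e /\ irreflexive e.
Definition no_isolated : Prop := forall v : T, exists u, e v u.
Definition deg (v : T) : nat := #|[set u | e v u]|.

(* D : seq T is the list of vertices chosen so far *)
Definition dominated (D : seq T) (v : T) : bool := has (e v) D.

Definition legal (D : seq T) (x : T) : bool := [exists u, e x u && ~~ dominated D u].

Fixpoint legal_from (D : seq T) (s : seq T) : bool :=
  match s with
  | [::] => true
  | x :: s' => legal D x && legal_from (rcons D x) s'
  end.
Definition is_play (s : seq T) : bool := legal_from [::] s.

Definition white (D : seq T) (v : T) : bool := ~~ dominated D v && (v \notin D).
Definition green (D : seq T) (v : T) : bool := ~~ dominated D v && (v \in D).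
Definition blue (D : seq T) (v : T) : bool :=
  dominated D v && [exists u, e v u && ~~ dominated D u].
Definition red (D : seq T) (v : T) : bool :=
  dominated D v && [forall u, e v u ==> dominated D u].

Definition weight (D : seq T) (v : T) : nat :=
  if white D v then 3 else if green D v then 2 else if blue D v then 1 else 0.
Definition total_weight (D : seq T) : nat := \sum_(v : T) weight D v.

(* "value of x at most 4": total_weight D - total_weight (D ++ [x]) <= 4 (over integers) *)
Definition value_le4 (D : seq T) (x : T) : Prop :=
  total_weight D <= total_weight (rcons D x) + 4.

(* residual graph: non-red vertices; G-edges between them except blue-blue edges *)
Definition Redge (D : seq T) : rel T := fun x y =>
  [&& e x y, ~~ red D x, ~~ red D y & ~~ (blue D x && blue D y)].

Definition Rcomp (D : seq T) (v : T) : {set T} := [set u | connect (Redge D) v u].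

Definition adj2 (a b x y : T) : bool := ((x == a) && (y == b)) || ((x == b) && (y == a)).

Definition comp_P4 (D : seq T) (C : {set T}) : Prop :=
  exists a b c d : T,
    [/\ uniq [:: a; b; c; d], C = [set a; b; c; d],
        (forall x y, x \in C -> y \in C -> Redge D x y = [|| adj2 a b x y, adj2 b c x y | adj2 c d x y]),
        blue D a && blue D d & white D b && white D c].

Definition comp_P3 (D : seq T) (C : {set T}) : Prop :=
  exists a b c : T,
    [/\ uniq [:: a; b; c], C = [set a; b; c],
        (forall x y, x \in C -> y \in C -> Redge D x y = adj2 a b x y || adj2 b c x y),
        blue D a && blue D c & green D b].

Definition comp_P2 (D : seq T) (C : {set T}) (col : seq T -> T -> bool) : Prop :=
  exists a b : T,
    [/\ a != b, C = [set a; b],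
        (forall x y, x \in C -> y \in C -> Redge D x y = adj2 a b x y),
        blue D a & col D b].

End TotalDomGame.

From mathcomp Require Import all_boot zify.
Set Implicit Arguments. Unset Strict Implicit. Unset Printing Implicit Defensive.

(* Playing p
   lowers the weight of each undominated neighbour of p by at least 2, of a white p by
   at least 1, and of a blue vertex by 1 as soon as p dominates its last undominated
   neighbour.  As no legal move is worth more than 4, each of the following would yield
   a move of value at least 5 and so cannot occur: a dominated vertex with two
   undominated neighbours; a green vertex of degree at least 3; a white vertex with two
   undominated neighbours; an undominated vertex with an undominated neighbour and two
   dominated ones; a white vertex of degree at least 2 whose neighbours are all dominated.
   Every component of R contains an undominated vertex u, and a blue vertex is joined in
   R only to its unique undominated neighbour, so the component is read off from the
   neighbourhood of u.  When u has an undominated neighbour w, the degree condition on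
   the edge uw is what forces both u and w to have a dominated neighbour, giving P4. *)

Section TotalDominationGame.
Variables (T : finType) (e : rel T).
Hypotheses (e_sym : symmetric e) (e_irr : irreflexive e).

Lemma sym_edge x y : e x y -> e y x.
Proof. by rewrite e_sym. Qed.

Lemma edge_neq x y : e x y -> x != y.
Proof. by move=> xy; apply: contraTneq xy => ->; rewrite e_irr. Qed.

Section Weights.
Variable D : seq T.
Local Notation dom := (dominated e D).

Lemma dominated_neq x y : dom x -> ~~ dom y -> x != y.
Proof. by move=> hx hy; apply: contraNneq hy => <-. Qed.

Lemma dominated_by_played x y : e x y -> y \in D -> dom x.
Proof. by move=> xy yD; apply/hasP; exists y. Qed.

Lemma undominated_nbr_notin x y : ~~ dom x -> e x y -> y \notin D.
Proof. by move=> hx xy; apply: contra hx; apply: dominated_by_played. Qed.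

Lemma legalI p u : e p u -> ~~ dom u -> legal e D p.
Proof. by move=> pu hu; apply/existsP; exists u; rewrite pu. Qed.

Lemma blueI b u : dom b -> e b u -> ~~ dom u -> blue e D b.
Proof. by move=> hb bu hu; rewrite /blue hb; apply/existsP; exists u; rewrite bu. Qed.

Lemma weight_white x : ~~ dom x -> x \notin D -> weight e D x = 3.
Proof. by move=> hx xD; rewrite /weight /white hx xD. Qed.

Lemma weight_green x : ~~ dom x -> x \in D -> weight e D x = 2.
Proof. by move=> hx xD; rewrite /weight /white /green hx xD. Qed.

Lemma weight_dominated x : dom x -> weight e D x <= 1.
Proof. by move=> hx; rewrite /weight /white /green hx; case: ifP. Qed.

Lemma weight_blue b u : dom b -> e b u -> ~~ dom u -> weight e D b = 1.
Proof. by move=> hb bu hu; rewrite /weight /white /green hb (blueI hb bu hu). Qed.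

Lemma weight_red x : dom x -> (forall y, e x y -> dom y) -> weight e D x = 0.
Proof.
move=> hx hN; rewrite /weight /white /green /blue hx /=.
by case: existsP => // -[y /andP [/hN ->]].
Qed.

End Weights.

Variable D : seq T.
Local Notation dom := (dominated e D).
Local Notation dom' p := (dominated e (rcons D p)).

Lemma dominated_rcons p x : dom' p x = e x p || dom x.
Proof. by rewrite /dominated has_rcons. Qed.

Lemma dominated_rconsW p x : dom x -> dom' p x.
Proof. by move=> hx; rewrite dominated_rcons hx orbT. Qed.

Lemma weight_rcons_le p x : weight e (rcons D p) x <= weight e D x.
Proof.
rewrite /weight /white /green /blue dominated_rcons mem_rcons in_cons.
case: (boolP (dom x)) => /= hx; last first.
  by case: (e x p); case: (x == p); case: (x \in D); case: existsP.
rewrite orbT /=; case: existsP => // [[y /andP [xy]]].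
rewrite dominated_rcons negb_or => /andP [_ hy].
by case: existsP => // [[]]; exists y; rewrite xy.
Qed.

Definition wdrop p x := weight e D x - weight e (rcons D p) x.

Lemma wdrop_sum_le4 p (l : seq T) : value_le4 e D p -> uniq l ->
  \sum_(x <- l) wdrop p x <= 4.
Proof.
move=> hp ul.
suff : total_weight e (rcons D p) + \sum_(x <- l) wdrop p x <= total_weight e D.
  by move: hp; rewrite /value_le4; lia.
rewrite big_uniq // big_mkcond /total_weight -big_split /=.
apply: leq_sum => x _; have := weight_rcons_le p x; rewrite /wdrop; case: ifP => _; lia.
Qed.

Lemma wdrop_undominated p x : ~~ dom x -> e x p -> 2 <= wdrop p x.
Proof.
move=> hx xp; have hx' : dom' p x by rewrite dominated_rcons xp.
rewrite /wdrop; case: (boolP (x \in D)) => xD.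
  rewrite weight_green // weight_red // => y xy.
  by apply: dominated_rconsW; apply: dominated_by_played (sym_edge xy) xD.
by rewrite weight_white //; have := weight_dominated hx'; lia.
Qed.

Lemma wdrop_played_white p : ~~ dom p -> p \notin D -> 1 <= wdrop p p.
Proof.
move=> hp pD; rewrite /wdrop weight_white // weight_green //.
  by rewrite dominated_rcons e_irr.
by rewrite mem_rcons mem_head.
Qed.

Lemma wdrop_blue_red p b u : dom b -> e b u -> ~~ dom u ->
  (forall y, e b y -> dom' p y) -> wdrop p b = 1.
Proof.
move=> hb bu hu hN.
by rewrite /wdrop (weight_blue hb bu hu) weight_red // dominated_rconsW.
Qed.

Lemma wdrop_white_red p u : ~~ dom u -> u \notin D -> dom' p u ->
  (forall y, e u y -> dom' p y) -> wdrop p u = 3.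
Proof. by move=> hu uD hu' hN; rewrite /wdrop weight_white // weight_red. Qed.

Lemma played_nbrs_dominated p y : e p y -> dom' p y.
Proof. by move=> py; rewrite dominated_rcons e_sym py. Qed.

Local Notation R := (Redge e D).

Lemma Redge_sym : symmetric R.
Proof.
move=> x y; rewrite /Redge e_sym; case: (e y x) => //=.
by case: (red e D x); case: (red e D y); case: (blue e D x); case: (blue e D y).
Qed.

Lemma Redge_undominated x y : ~~ dom x -> R x y = e x y.
Proof.
move=> hx; rewrite /Redge /red /blue (negbTE hx) /= andbT.
case: (boolP (e x y)) => //= xy; apply/negP => /andP [_ /forallP /(_ x)].
by rewrite e_sym xy (negbTE hx).
Qed.

Lemma blue_of_dominated x : dom x -> ~~ red e D x -> blue e D x.
Proof.
move=> hx; rewrite /red hx /= => /forallPn [y].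
by rewrite negb_imply => /andP [xy hy]; apply: blueI hx xy hy.
Qed.

Lemma Redge_dominated b y : dom b -> R b y -> ~~ dom y && e b y.
Proof.
move=> hb /and4P [by' nrb nry nbb]; rewrite by' andbT.
by apply: contra nbb => hy; rewrite !blue_of_dominated.
Qed.

Lemma Rcomp_eq (S : {set T}) v u : connect R v u -> u \in S ->
  (forall x y, x \in S -> R x y -> y \in S) ->
  (forall x, x \in S -> connect R u x) -> Rcomp e D v = S.
Proof.
move=> vu uS clS conS; apply/setP => z; rewrite inE; apply/idP/idP => [vz|/conS].
  have closedS : closed R (mem S).
    by move=> x y xy; apply/idP/idP => [/clS|/clS]; apply=> //; rewrite Redge_sym.
  rewrite -(closed_connect closedS (_ : connect R u z)) //.
  by apply: connect_trans vz; rewrite (sym_connect_sym Redge_sym).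
exact: connect_trans.
Qed.

Ltac neq_false := repeat match goal with
  | H : is_true (?x != ?y) |- context [?x == ?y] => rewrite (negbTE H)
  | H : is_true (?x != ?y) |- context [?y == ?x] => rewrite (eq_sym y x) (negbTE H)
  end.

Lemma comp_P2_of (col : seq T -> T -> bool) v a b : a != b ->
  (forall y, R a y = (y == b)) -> (forall y, R b y = (y == a)) ->
  connect R v b -> blue e D a -> col D b -> comp_P2 e D (Rcomp e D v) col.
Proof.
move=> ab Ra Rb vb ha hb.
have C : Rcomp e D v = [set a; b].
  apply: (Rcomp_eq vb); first by rewrite !inE eqxx orbT.
    move=> x y; rewrite !inE => /orP [] /eqP ->; rewrite ?Ra ?Rb;
      by move/eqP->; rewrite eqxx ?orbT.
  by move=> x; rewrite !inE => /orP [] /eqP ->; [apply: connect1; rewrite Rb|].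
exists a, b; split; rewrite ?C // => x y.
by rewrite !inE => /orP [] /eqP -> _; rewrite ?Ra ?Rb /adj2 !eqxx; neq_false;
  rewrite /= ?orbF.
Qed.

Lemma comp_P3_of v a b c : uniq [:: a; b; c] ->
  (forall y, R a y = (y == b)) -> (forall y, R b y = (y == a) || (y == c)) ->
  (forall y, R c y = (y == b)) ->
  connect R v b -> blue e D a && blue e D c -> green e D b ->
  comp_P3 e D (Rcomp e D v).
Proof.
move=> uq Ra Rb Rc vb hac hb.
move: (uq); rewrite /= !inE !negb_or => /and3P [/andP [ab ac] bc _].
have C : Rcomp e D v = [set a; b; c].
  apply: (Rcomp_eq vb); first by rewrite !inE eqxx orbT.
    move=> x y; rewrite !inE -!orbA => /or3P [] /eqP ->; rewrite ?Ra ?Rb ?Rc;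
      by do ?case/orP; move/eqP->; rewrite eqxx ?orbT.
  by move=> x; rewrite !inE -!orbA => /or3P [] /eqP ->; rewrite ?connect0 //;
    apply: connect1; rewrite Rb eqxx ?orbT.
exists a, b, c; split; rewrite ?C // => x y.
by rewrite !inE -!orbA => /or3P [] /eqP -> _; rewrite ?Ra ?Rb ?Rc /adj2 !eqxx; neq_false;
  rewrite /= ?orbF.
Qed.

Lemma comp_P4_of v a b c d : uniq [:: a; b; c; d] ->
  (forall y, R a y = (y == b)) -> (forall y, R b y = (y == a) || (y == c)) ->
  (forall y, R c y = (y == b) || (y == d)) -> (forall y, R d y = (y == c)) ->
  connect R v b -> blue e D a && blue e D d -> white e D b && white e D c ->
  comp_P4 e D (Rcomp e D v).
Proof.
move=> uq Ra Rb Rc Rd vb had hbc.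
move: (uq); rewrite /= !inE !negb_or => /and4P [/and3P [ab ac ad] /andP [bc bd] cd _].
have C : Rcomp e D v = [set a; b; c; d].
  apply: (Rcomp_eq vb); first by rewrite !inE eqxx orbT.
    move=> x y; rewrite !inE -!orbA => /or4P [] /eqP ->; rewrite ?Ra ?Rb ?Rc ?Rd;
      by do ?case/orP; move/eqP->; rewrite eqxx ?orbT.
  move=> x; rewrite !inE -!orbA => /or4P [] /eqP ->; rewrite ?connect0 //.
  - by apply: connect1; rewrite Rb eqxx.
  - by apply: connect1; rewrite Rb eqxx orbT.
  by apply: (connect_trans (y := c)); apply: connect1; rewrite ?Rb ?Rc eqxx orbT.
exists a, b, c, d; split; rewrite ?C // => x y.
by rewrite !inE -!orbA => /or4P [] /eqP -> _; rewrite ?Ra ?Rb ?Rc ?Rd /adj2 !eqxx; neq_false;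
  rewrite /= ?orbF.
Qed.

Lemma undominated_in_comp v : ~~ red e D v -> exists2 u, ~~ dom u & connect R v u.
Proof.
move=> nrv; case: (boolP (dom v)) => hv; last by exists v.
case/andP: (blue_of_dominated hv nrv) => _ /existsP [u /andP [vu hu]].
by exists u => //; apply: connect1; rewrite Redge_sym Redge_undominated // sym_edge.
Qed.

Section SmallMoves.
Hypothesis small_moves : forall x, legal e D x -> value_le4 e D x.

Lemma undominated_nbr_unique b x y : dom b -> e b x -> e b y ->
  ~~ dom x -> ~~ dom y -> x = y.
Proof.
move=> hb bx bY hx hy; case: (eqVneq x y) => // nxy; exfalso.
have ul : uniq [:: x; y; b].
  by rewrite /= !inE negb_or nxy !(eq_sym _ b) !(@dominated_neq D).
have := wdrop_sum_le4 (small_moves (legalI bx hx)) ul.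
rewrite !big_cons big_nil (wdrop_blue_red hb bx hx (@played_nbrs_dominated b)).
have := wdrop_undominated hx (sym_edge bx); have := wdrop_undominated hy (sym_edge bY).
lia.
Qed.

Lemma nbrs_dominated_after b u p : dom b -> e b u -> ~~ dom u -> e u p ->
  forall y, e b y -> dom' p y.
Proof.
move=> hb bu hu up y bY; case: (boolP (dom y)) => hy; first exact: dominated_rconsW.
by rewrite (undominated_nbr_unique hb bY bu hy hu) dominated_rcons up.
Qed.

Lemma green_nbrs u b1 b2 y : u \in D -> ~~ dom u -> e u b1 -> e u b2 -> b1 != b2 ->
  e u y -> (y == b1) || (y == b2).
Proof.
move=> uD hu ub1 ub2 n12 uy; apply: contraT; rewrite negb_or => /andP [ny1 ny2].
have hb z : e u z -> dom z by move=> uz; apply: dominated_by_played (sym_edge uz) uD.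
have nu z : e u z -> u != z by move/hb/(dominated_neq)/(_ hu); rewrite eq_sym.
have ul : uniq [:: u; b1; b2; y].
  by rewrite /= !inE !negb_or n12 !nu // ![_ == y]eq_sym ny1 ny2.
have := wdrop_sum_le4 (small_moves (legalI (sym_edge ub1) hu)) ul.
have drop_blue z : e u z -> wdrop b1 z = 1.
  move=> uz; apply: (wdrop_blue_red (hb _ uz) (sym_edge uz) hu).
  exact: nbrs_dominated_after (hb _ uz) (sym_edge uz) hu ub1.
rewrite !big_cons big_nil (drop_blue b1) // (drop_blue b2) // (drop_blue y) //.
have := wdrop_undominated hu ub1; lia.
Qed.

Lemma white_undominated_nbr_unique u w1 w2 : ~~ dom u -> u \notin D ->
  e u w1 -> e u w2 -> ~~ dom w1 -> ~~ dom w2 -> w1 = w2.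
Proof.
move=> hu uD uw1 uw2 hw1 hw2; case: (eqVneq w1 w2) => // n12; exfalso.
have ul : uniq [:: u; w1; w2] by rewrite /= !inE !negb_or n12 !edge_neq.
have := wdrop_sum_le4 (small_moves (legalI uw1 hw1)) ul; rewrite !big_cons big_nil.
have := wdrop_played_white hu uD.
have := wdrop_undominated hw1 (sym_edge uw1); have := wdrop_undominated hw2 (sym_edge uw2).
lia.
Qed.

Lemma undominated_edge_dominated_nbr_unique u w y1 y2 : ~~ dom u -> ~~ dom w ->
  e u w -> dom y1 -> dom y2 -> e u y1 -> e u y2 -> y1 = y2.
Proof.
move=> hu hw uw hy1 hy2 uy1 uy2; case: (eqVneq y1 y2) => // n12; exfalso.
have ul : uniq [:: u; w; y1; y2].
  rewrite /= !inE !negb_or n12 edge_neq //.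
  by rewrite !(eq_sym _ y1) !(eq_sym _ y2) !(@dominated_neq D).
have := wdrop_sum_le4 (small_moves (legalI (sym_edge uw) hu)) ul.
have drop_blue y : dom y -> e u y -> wdrop w y = 1.
  move=> hy uy; apply: (wdrop_blue_red hy (sym_edge uy) hu).
  exact: nbrs_dominated_after hy (sym_edge uy) hu uw.
rewrite !big_cons big_nil (drop_blue y1) // (drop_blue y2) //.
have := wdrop_undominated hu uw.
have := wdrop_played_white hw (undominated_nbr_notin hu uw); lia.
Qed.

Lemma lone_white_nbr_unique u b1 b2 : ~~ dom u -> u \notin D ->
  (forall y, e u y -> dom y) -> e u b1 -> e u b2 -> b1 = b2.
Proof.
move=> hu uD hN ub1 ub2; case: (eqVneq b1 b2) => // n12; exfalso.
have nu z : e u z -> u != z by move/hN/dominated_neq/(_ hu); rewrite eq_sym.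
have ul : uniq [:: u; b1; b2] by rewrite /= !inE !negb_or n12 !nu.
have := wdrop_sum_le4 (small_moves (legalI (sym_edge ub1) hu)) ul.
have drop_blue z : e u z -> wdrop b1 z = 1.
  move=> uz; apply: (wdrop_blue_red (hN _ uz) (sym_edge uz) hu).
  exact: nbrs_dominated_after (hN _ uz) (sym_edge uz) hu ub1.
rewrite !big_cons big_nil (drop_blue b1) // (drop_blue b2) //.
rewrite (wdrop_white_red hu uD (played_nbrs_dominated (sym_edge ub1))) //.
by move=> y /hN /dominated_rconsW.
Qed.

Lemma Redge_dominatedE b u : dom b -> e b u -> ~~ dom u -> forall y, R b y = (y == u).
Proof.
move=> hb bu hu y; apply/idP/eqP => [/(Redge_dominated hb)/andP [hy bY] | ->].
  exact: undominated_nbr_unique bY bu hy hu.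
by rewrite Redge_sym Redge_undominated // sym_edge.
Qed.

Section Components.
Hypothesis no_isolated_e : no_isolated e.
Hypothesis deg_edge : forall u v, e u v -> 4 <= deg e u + deg e v.

Lemma green_comp v u : connect R v u -> u \in D -> ~~ dom u ->
  comp_P3 e D (Rcomp e D v) \/ comp_P2 e D (Rcomp e D v) (@green T e).
Proof.
move=> vu uD hu; have hgreen : green e D u by rewrite /green hu uD.
have hN y : e u y -> dom y by move=> uy; apply: dominated_by_played (sym_edge uy) uD.
have [b1 ub1] := no_isolated_e u.
have Rb1 := Redge_dominatedE (hN _ ub1) (sym_edge ub1) hu.
have nb1u : b1 != u by rewrite (dominated_neq (hN _ ub1) hu).
case: (boolP [exists b, e u b && (b != b1)]).
  case/existsP=> b2 /andP [ub2 n21].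
  left; apply: (comp_P3_of (c := b2) _ Rb1 _ _ vu _ hgreen).
  - by rewrite /= !inE !negb_or nb1u eq_sym n21 eq_sym (dominated_neq (hN _ ub2) hu).
  - move=> y; rewrite Redge_undominated //; apply/idP/idP => [uy|/orP [] /eqP -> //].
    by rewrite (green_nbrs uD hu ub1 ub2) // eq_sym.
  - exact: Redge_dominatedE (hN _ ub2) (sym_edge ub2) hu.
  - by rewrite (blueI (hN _ ub1) (sym_edge ub1) hu) (blueI (hN _ ub2) (sym_edge ub2) hu).
move/existsPn=> lone; right; apply: (comp_P2_of nb1u Rb1 _ vu _ hgreen).
  move=> y; rewrite Redge_undominated //; apply/idP/eqP => [uy|-> //].
  by apply/eqP; move: (lone y); rewrite uy /= negbK.
exact: blueI (hN _ ub1) (sym_edge ub1) hu.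
Qed.

Lemma undominated_pair_nbr_dominated u w y : ~~ dom u -> ~~ dom w -> e u w ->
  e u y -> y != w -> dom y.
Proof.
move=> hu hw uw uy yw; apply: contraT => hy.
move: yw; rewrite (white_undominated_nbr_unique hu _ uy uw hy hw) ?eqxx //.
exact: undominated_nbr_notin hw (sym_edge uw).
Qed.

Lemma undominated_pair_other_nbr u w : ~~ dom u -> ~~ dom w -> e u w ->
  exists2 a, e u a & a != w.
Proof.
move=> hu hw uw.
case: (boolP [exists a, e u a && (a != w)]) => [/existsP [a /andP []] | /existsPn lone].
  by exists a.
exfalso; have deg_u : deg e u <= 1.
  rewrite /deg -(cards1 w); apply/subset_leq_card/subsetP => y.
  by rewrite !inE => uy; move: (lone y); rewrite uy negbK.
have := deg_edge uw; rewrite {2}/deg (cardsD1 u) inE (sym_edge uw) /= => deg_uw.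
have /card_gt1P [y1 [y2 []]] : 1 < #|[set y | e w y] :\ u| by lia.
rewrite !inE => /andP [n1 wy1] /andP [n2 wy2]; apply/negP; rewrite negbK; apply/eqP.
apply: (undominated_edge_dominated_nbr_unique hw hu (sym_edge uw)) => //.
  exact: undominated_pair_nbr_dominated hw hu (sym_edge uw) wy1 n1.
exact: undominated_pair_nbr_dominated hw hu (sym_edge uw) wy2 n2.
Qed.

Lemma undominated_pair_nbrs u w : ~~ dom u -> ~~ dom w -> e u w ->
  exists2 a, dom a & forall y, e u y = (y == a) || (y == w).
Proof.
move=> hu hw uw; have [a ua aw] := undominated_pair_other_nbr hu hw uw.
have da := undominated_pair_nbr_dominated hu hw uw ua aw.
exists a => // y; apply/idP/idP => [uy|/orP [] /eqP -> //].
case: (eqVneq y w) => [_|yw]; first by rewrite orbT.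
have dy := undominated_pair_nbr_dominated hu hw uw uy yw.
by rewrite (undominated_edge_dominated_nbr_unique hu hw uw dy da uy ua) eqxx.
Qed.

Lemma white_pair_comp v u w : connect R v u -> ~~ dom u -> ~~ dom w -> e u w ->
  comp_P4 e D (Rcomp e D v).
Proof.
move=> vu hu hw uw.
have [a da Nu] := undominated_pair_nbrs hu hw uw.
have [d dd Nw] := undominated_pair_nbrs hw hu (sym_edge uw).
have ua : e u a by rewrite Nu eqxx.
have wd : e w d by rewrite Nw eqxx.
have nad : a != d.
  apply/eqP => ad; move/eqP: (edge_neq uw); apply; rewrite ad in ua.
  exact: undominated_nbr_unique dd (sym_edge ua) (sym_edge wd) hu hw.
apply: (comp_P4_of (a := a) (c := w) (d := d) _ _ _ _ _ vu).
- rewrite /= !inE !negb_or nad (dominated_neq da hu) (dominated_neq da hw) (edge_neq uw).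
  by rewrite ![_ == d]eq_sym (dominated_neq dd hu) (dominated_neq dd hw).
- exact: Redge_dominatedE da (sym_edge ua) hu.
- by move=> y; rewrite Redge_undominated.
- by move=> y; rewrite Redge_undominated // orbC.
- exact: Redge_dominatedE dd (sym_edge wd) hw.
- by rewrite (blueI da (sym_edge ua) hu) (blueI dd (sym_edge wd) hw).
by rewrite /white hu hw (undominated_nbr_notin hu uw)
  (undominated_nbr_notin hw (sym_edge uw)).
Qed.

Lemma lone_white_comp v u : connect R v u -> ~~ dom u -> u \notin D ->
  (forall y, e u y -> dom y) -> comp_P2 e D (Rcomp e D v) (@white T e).
Proof.
move=> vu hu uD hN; have [b ub] := no_isolated_e u.
apply: (comp_P2_of (b := u) _ (Redge_dominatedE (hN _ ub) (sym_edge ub) hu) _ vu).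
- exact: dominated_neq (hN _ ub) hu.
- move=> y; rewrite Redge_undominated //; apply/idP/eqP => [uy|-> //].
  exact: lone_white_nbr_unique hu uD hN uy ub.
- exact: blueI (hN _ ub) (sym_edge ub) hu.
by rewrite /white hu uD.
Qed.
End Components.
End SmallMoves.
End TotalDominationGame.

Theorem claim2p2 (T : finType) (e : rel T) :
  simple_graph e ->
  no_isolated e ->
  (forall u v : T, e u v -> 4 <= deg e u + deg e v) ->
  forall s : seq T, is_play e s ->
  (forall x : T, legal e s x -> value_le4 e s x) ->
  forall v : T, ~~ red e s v ->
    let C := Rcomp e s v in
    [\/ comp_P4 e s C, comp_P3 e s C, comp_P2 e s C (@green T e)
      | comp_P2 e s C (@white T e)].
Proof.
move=> [e_sym e_irr] no_iso deg_edge s _ small_moves v nrv C.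
have [u hu vu] := undominated_in_comp e_sym nrv.
case: (boolP (u \in s)) => uD.
  by case: (green_comp e_sym small_moves no_iso vu uD hu); [apply: Or42 | apply: Or43].
case: (boolP [exists w, e u w && ~~ dominated e s w]).
  case/existsP => w /andP [uw hw].
  exact/Or41/(white_pair_comp e_sym e_irr small_moves deg_edge vu hu hw uw).
move/existsPn=> lone; apply/Or44/(lone_white_comp e_sym small_moves no_iso vu hu uD).
by move=> y uy; move: (lone y); rewrite uy negbK.
Qed.
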